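(* Let $P$ be the uniform distribution on $[0,1]$ and $\beta=\{\frac14,\frac12\}$. The conditional optimal set of five-points for $P$ with respect to $\beta$ is $\alpha_5=\{\frac1{12},\frac14,\frac12,\frac7{10},\frac9{10}\}$, with $V_5=\frac{613}{172800}$ ($\approx0.00354745$).
   Context: For a Borel probability measure $P$ on $\mathbb{R}$ and finite $\beta$ with $\mathrm{card}(\beta)=r$, for $n\ge r$, $V_n=\inf\{\int\min_{a\in\alpha\cup\beta}(x-a)^2dP(x):\mathrm{card}(\alpha)\le n-r\}$; a set $\alpha\cup\beta$ attaining the infimum, with each point of $\beta$ having a Voronoi region of positive $P$-measure, is a conditional optimal set of $n$-points with respect to $\beta$. *)

From HB Require Import structures.
From mathcomp Require Import all_boot all_order all_algebra finmap.
From mathcomp Require Import all_classical all_reals all_analysis.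
Set Implicit Arguments. Unset Strict Implicit. Unset Printing Implicit Defensive.
Import Order.TTheory GRing.Theory Num.Theory.
Local Open Scope classical_set_scope.
Local Open Scope ring_scope.
Local Open Scope fset_scope.

Section CondQuant.
Variable R : realType.

Definition sqdist_min (g : {fset R}) (x : R) : \bar R :=
  \big[Order.min/+oo%E]_(a <- enum_fset g) ((x - a) ^+ 2)%:E.

Definition distortion (P : probability (measurableTypeR R) R) (g : {fset R}) : \bar R :=
  (\int[P]_x sqdist_min g x)%E.

Definition cond_error (P : probability (measurableTypeR R) R) (n : nat) (beta : {fset R}) : \bar R :=
  ereal_inf [set distortion P (alpha `|` beta) |
             alpha in [set alpha : {fset R} | (#|` alpha| <= n - #|` beta|)%N]].

Definition voronoi (g : {fset R}) (b : R) : set R :=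
  [set x | forall a, a \in g -> `|x - b| <= `|x - a|].

Definition cond_optimal_set (P : probability (measurableTypeR R) R) (n : nat) (beta g : {fset R}) : Prop :=
  exists alpha : {fset R},
    [/\ (#|` alpha| <= n - #|` beta|)%N,
        g = alpha `|` beta,
        distortion P g = cond_error P n beta &
        forall b, b \in beta -> (0 < P (voronoi g b))%E].

Definition unif01 : probability (measurableTypeR R) R := uniform_prob (@ltr01 R).

End CondQuant.

(* The uniform distortion of a sorted codebook c_1 <= ... <= c_k on [u, v] is
   (c_1 - u)^3/3 + sum_i (c_(i+1) - c_i)^3/12 + (v - c_k)^3/3, and clamping the
   points of any codebook into [u, v] can only lower its distortion on [u, v].
   Write the free points as p1 <= p2 <= p3.  If p1 >= 1/4, the interval [0, 1/4]
   alone costs 1/192 > V5; if p2 <= 1/2, the interval [1/2, 1] is served by 1/2 and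
   at most one more point and costs at least 1/216 > V5.  Otherwise the clamped
   codebook is r <= 1/4 <= 1/2 <= q2 <= q3, whose cost is a sum of cubes of gaps
   subject to two linear constraints; bounding each cube below by its tangent at the
   optimal gap (1/12, 1/6 and 1/5, 1/5, 1/10) leaves V5 plus nonnegative terms that
   vanish only at alpha5. *)

From HB Require Import structures.
From mathcomp Require Import all_boot all_order all_algebra finmap.
From mathcomp Require Import all_classical all_reals all_analysis measurable_realfun.
From mathcomp Require Import ring lra zify.
Import Order.TTheory GRing.Theory Num.Theory numFieldNormedType.Exports.
Set Implicit Arguments. Unset Strict Implicit. Unset Printing Implicit Defensive.
Local Open Scope ring_scope.
Local Open Scope classical_set_scope.

Lemma cardfs3_le (K : choiceType) (a b c : K) : (#|` [fset a; b; c]%fset| <= 3)%N.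
Proof. rewrite !cardfsU !cardfs1; lia. Qed.

Lemma fsetU_sorted3 (disp : Order.disp_t) (T : orderType disp) (A B : {fset T}) (d : T) :
  (#|` A| <= 3)%N -> d \in B ->
  exists t1 t2 t3,
    [/\ (t1 <= t2)%O, (t2 <= t3)%O & (A `|` B = [fset t1; t2; t3] `|` B)%fset].
Proof.
move=> A3 dB; have memA : A =i sort <=%O (enum_fset A) by move=> x; rewrite mem_sort.
have : (size (sort <=%O (enum_fset A)) <= 3)%N by rewrite size_sort.
move: memA (sort_sorted (@le_total _ T) (enum_fset A)).
case: (sort _ _) => [|t1 [|t2 [|t3 [|? ?]]]] memA /= sorted_s // _.
- exists d, d, d; split => //; apply/fsetP => x; rewrite !inE memA /=.
  by case: eqP => // ->.
- exists t1, t1, t1; split => //; apply/fsetP => x; rewrite !inE memA !inE.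
  by case: (x == t1).
- exists t1, t2, t2; split; rewrite ?(andP sorted_s).1 //.
  apply/fsetP => x; rewrite !inE memA !inE.
  by case: (x == t1); case: (x == t2).
- have /and3P[t12 t23 _] := sorted_s; exists t1, t2, t3; split => //.
  apply/fsetP => x; rewrite !inE memA !inE.
  by case: (x == t1); case: (x == t2); case: (x == t3).
Qed.

Section UniformQuantization.
Variable R : realType.
Local Notation mu := (@lebesgue_measure R).

Lemma sqr_le_nearer (x a b : R) : a <= b -> 2 * x <= a + b -> (x - a) ^+ 2 <= (x - b) ^+ 2.
Proof.
move=> ab xab; rewrite -subr_ge0.
have -> : (x - b) ^+ 2 - (x - a) ^+ 2 = (b - a) * (a + b - 2 * x) by ring.
by apply: mulr_ge0; rewrite subr_ge0.
Qed.

Lemma sqr_ge_nearer (x a b : R) : a <= b -> a + b <= 2 * x -> (x - b) ^+ 2 <= (x - a) ^+ 2.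
Proof.
move=> ab xab; rewrite -subr_ge0.
have -> : (x - a) ^+ 2 - (x - b) ^+ 2 = (b - a) * (2 * x - a - b) by ring.
by apply: mulr_ge0; lra.
Qed.

Lemma ler_norm_sqr (x y : R) : (`|x| <= `|y|) = (x ^+ 2 <= y ^+ 2).
Proof. by rewrite -ler_sqr ?nnegrE ?normr_ge0 // !real_normK ?num_real. Qed.

(* How far t^3 lies above its tangent line at t0. *)
Definition cube_excess (t0 t : R) : R := (t - t0) ^+ 2 * (t + 2 * t0).

Lemma cube_excess_ge0 (t0 t : R) : 0 <= t0 -> 0 <= t -> 0 <= cube_excess t0 t.
Proof. by move=> t0_ge0 t_ge0; apply: mulr_ge0; [exact: sqr_ge0 | lra]. Qed.

Lemma cube_excess_le0 (t0 t : R) : 0 < t0 -> 0 <= t -> cube_excess t0 t <= 0 -> t = t0.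
Proof.
move=> t0_gt0 t_ge0; rewrite /cube_excess pmulr_lle0; last by lra.
by move=> sq_le0; apply/eqP; rewrite -subr_eq0 -sqrf_eq0 eq_le sq_le0 sqr_ge0.
Qed.

Definition clamp (u v p : R) : R := if p < u then u else if v < p then v else p.

Lemma clamp_itv (u v p : R) : u <= v -> u <= clamp u v p <= v.
Proof. by rewrite /clamp => uv; case: ltP => pu; [|case: ltP => vp]; apply/andP; split; lra. Qed.

Lemma sqr_clamp_le (u v p x : R) : u <= x <= v -> (x - clamp u v p) ^+ 2 <= (x - p) ^+ 2.
Proof.
rewrite /clamp => /andP[ux xv]; case: ltP => pu; [|case: ltP => vp //].
- by apply: sqr_ge_nearer; lra.
- by apply: sqr_le_nearer; lra.
Qed.

Lemma clamp_id (u v p : R) : u <= p <= v -> clamp u v p = p.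
Proof. by rewrite /clamp => /andP[up pv]; case: ltP => ?; [|case: ltP => ?]; lra. Qed.

Lemma clamp_le_l (u v p : R) : u <= v -> p <= u -> clamp u v p = u.
Proof. by rewrite /clamp => uv pu; case: ltP => ?; [|case: ltP => ?]; lra. Qed.

Lemma clamp_ge_r (u v p : R) : u <= v -> v <= p -> clamp u v p = v.
Proof. by rewrite /clamp => uv vp; case: ltP => ?; [|case: ltP => ?]; lra. Qed.

Lemma clamp_le (u v p e : R) : u <= e -> p <= e -> clamp u v p <= e.
Proof. by rewrite /clamp => ue pe; case: ltP => ?; [|case: ltP => ?]; lra. Qed.

Lemma clamp_ge (u v p e : R) : e <= v -> e <= p -> e <= clamp u v p.
Proof. by rewrite /clamp => ev ep; case: ltP => ?; [|case: ltP => ?]; lra. Qed.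

Lemma clamp_homo (u v : R) : u <= v -> {homo clamp u v : p q / p <= q}.
Proof.
rewrite /clamp => uv p q pq.
by case: (ltP p u); case: (ltP q u); case: (ltP v p); case: (ltP v q); lra.
Qed.

Lemma clamp_inj_in (u v p y : R) : u < y < v -> clamp u v p = y -> p = y.
Proof. by rewrite /clamp => /andP[uy yv]; case: ltP => ?; [|case: ltP => ?]; lra. Qed.

Definition sqdist_seq (s : seq R) (x : R) : \bar R :=
  \big[Order.min/+oo%E]_(a <- s) ((x - a) ^+ 2)%:E.

Lemma sqdist_seq_le s x a : a \in s -> (sqdist_seq s x <= ((x - a) ^+ 2)%:E)%E.
Proof.
rewrite /sqdist_seq; elim: s => [//|b s IH].
rewrite inE big_cons => /predU1P[->|/IH h]; first by rewrite ge_min lexx.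
by rewrite ge_min h orbT.
Qed.

Lemma sqdist_seq_ge s x (h : \bar R) :
  (forall a, a \in s -> (h <= ((x - a) ^+ 2)%:E)%E) -> (h <= sqdist_seq s x)%E.
Proof.
rewrite /sqdist_seq; elim: s => [|b s IH] hs; first by rewrite big_nil leey.
rewrite big_cons le_min hs ?mem_head //=; apply: IH => a sa.
by rewrite hs // inE sa orbT.
Qed.

Lemma eq_sqdist_seq s1 s2 : s1 =i s2 -> sqdist_seq s1 =1 sqdist_seq s2.
Proof.
move=> s12 x; apply/le_anti/andP; split; apply: sqdist_seq_ge => a sa;
  by apply: sqdist_seq_le; rewrite ?s12 // -s12.
Qed.

Lemma sqdist_min_seq (g : {fset R}) s : g =i s -> sqdist_min g =1 sqdist_seq s.
Proof. exact: eq_sqdist_seq. Qed.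

Lemma sqdist_seq_ge0 s x : (0 <= sqdist_seq s x)%E.
Proof. by apply: sqdist_seq_ge => a _; rewrite lee_fin sqr_ge0. Qed.

Lemma measurable_sqdist_seq s : measurable_fun [set: R] (sqdist_seq s).
Proof.
rewrite /sqdist_seq; elim: s => [|b s IH].
  by under eq_fun do rewrite big_nil; exact: measurable_cst.
under eq_fun do rewrite big_cons.
apply: measurable_mine => //; apply/measurable_EFinP.
by apply: measurable_funX; apply: measurable_funB => //; exact: measurable_cst.
Qed.

Lemma sqdist_clamp_le (g : {fset R}) (s : seq R) (u v x : R) :
  u <= x <= v -> (forall p, p \in g -> clamp u v p \in s) ->
  (sqdist_seq s x <= sqdist_min g x)%E.
Proof.
move=> xuv gs; apply: sqdist_seq_ge => p pg.
apply: le_trans (sqdist_seq_le x (gs p pg)) _.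
by rewrite lee_fin sqr_clamp_le.
Qed.

Lemma integral_itv_sqr (a u v : R) : u <= v ->
  (\int[mu]_(x in `[u, v]) ((x - a) ^+ 2)%:E =
   (((v - a) ^+ 3 - (u - a) ^+ 3) / 3)%:E)%E.
Proof.
rewrite le_eqVlt => /predU1P[<-|uv].
  by rewrite set_itv1 integral_set1 subrr mul0r.
pose G := fun y : R => (y - a) ^+ 3 / 3.
have dG (x : R) : is_derive x 1 G ((x - a) ^+ 2).
  by apply: is_derive_eq; rewrite !scaler0 !subr0 /GRing.scale /=; field.
have cG : continuous G.
  move=> x; apply: differentiable_continuous; apply/derivable1_diffP.
  by have [] := dG x.
rewrite (@continuous_FTC2 _ _ G) ?mulrBl ?EFinB //.
- by apply: derivable_within_continuous => x _; have [] := dG x.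
- split; first by move=> x _; have [] := dG x.
  + exact/cvg_at_right_filter/cG.
  + exact/cvg_at_left_filter/cG.
- by move=> x _; rewrite derive1E; have [_ ->] := dG x.
Qed.

Lemma ge0_integral_itv_split (F : R -> \bar R) (u w v : R) :
  measurable_fun [set: R] F -> (forall x, (0 <= F x)%E) -> u <= w -> w <= v ->
  (\int[mu]_(x in `[u, v]) F x =
   \int[mu]_(x in `[u, w]) F x + \int[mu]_(x in `[w, v]) F x)%E.
Proof.
move=> mF F0 uw wv.
rewrite (@itv_bndbnd_setU _ _ _ (BRight w)) ?bnd_simp // ge0_integral_setU //=.
- by rewrite integral_itv_obnd_cbnd //; exact: measurable_funS mF.
- exact: measurable_funS mF.
- apply/disj_setPS => x [] /=; rewrite !in_itv /= => /andP[_ xw] /andP[wx _].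
  by move: (lt_le_trans wx xw); rewrite ltxx.
Qed.

Fixpoint gap_cost (v a : R) (s : seq R) : R :=
  if s is b :: s' then (b - a) ^+ 3 / 12 + gap_cost v b s' else (v - a) ^+ 3 / 3.

Lemma integral_sqdist_sorted (u v a : R) (s : seq R) :
  path <=%R u (a :: rcons s v) ->
  (\int[mu]_(x in `[u, v]) sqdist_seq (a :: s) x =
   ((a - u) ^+ 3 / 3 + gap_cost v a s)%:E)%E.
Proof.
elim: s u a => [|b s IH] u a /=.
  move=> /and3P[ua av _].
  under eq_integral do rewrite /sqdist_seq big_cons big_nil minEle leey.
  by rewrite integral_itv_sqr ?(le_trans ua) //; congr (_%:E); field.
move=> /and3P[ua ab bsv]; set m := (a + b) / 2.
have am : a <= m by rewrite /m; lra.
have mb : m <= b by rewrite /m; lra.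
have /allP b_le_sv := order_path_min le_trans bsv.
have bv : b <= v by apply: b_le_sv; rewrite mem_rcons mem_head.
have b_le c : c \in b :: s -> b <= c.
  by rewrite inE => /predU1P[->//|cs]; apply: b_le_sv; rewrite mem_rcons inE cs orbT.
have near_a x : x \in `[u, m] -> sqdist_seq [:: a, b & s] x = ((x - a) ^+ 2)%:E.
  rewrite in_setE /= in_itv /= => /andP[_ xm]; apply/le_anti.
  rewrite sqdist_seq_le ?mem_head //=; apply: sqdist_seq_ge => c.
  rewrite inE lee_fin => /predU1P[->//|/b_le bc].
  by apply: sqr_le_nearer; rewrite /m in xm; lra.
have near_tail x : x \in `[m, v] -> sqdist_seq [:: a, b & s] x = sqdist_seq (b :: s) x.
  rewrite in_setE /= in_itv /= => /andP[mx _].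
  rewrite {1}/sqdist_seq big_cons -/(sqdist_seq _ _); apply/min_idPr.
  apply: le_trans (sqdist_seq_le _ (mem_head _ _)) _.
  by rewrite lee_fin; apply: sqr_ge_nearer; rewrite /m in mx; lra.
rewrite (ge0_integral_itv_split _ _ (le_trans ua am) (le_trans mb bv));
  [|exact: measurable_sqdist_seq|exact: sqdist_seq_ge0].
rewrite (eq_integral (mu := mu) _ _ near_a) (eq_integral (mu := mu) _ _ near_tail).
rewrite IH /= ?mb // integral_itv_sqr ?(le_trans ua am) // -EFinD; congr (_%:E).
by rewrite /m; field.
Qed.

Lemma distortion_unif01 (g : {fset R}) :
  distortion (unif01 R) g = (\int[mu]_(x in `[0%R, 1%R]) sqdist_min g x)%E.
Proof.
rewrite /distortion /unif01 integral_uniform ?subr0 ?invr1 ?mul1e //.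
- exact: measurable_sqdist_seq.
- by move=> x; exact: sqdist_seq_ge0.
Qed.

Lemma distortion_unif01_sorted (g : {fset R}) (a : R) (s : seq R) :
  g =i a :: s -> path <=%R 0 (a :: rcons s 1) ->
  distortion (unif01 R) g = (a ^+ 3 / 3 + gap_cost 1 a s)%:E.
Proof.
move=> gs sorted_s; rewrite distortion_unif01.
rewrite (eq_integral (mu := mu) _ _ (in1W (sqdist_min_seq gs))).
by rewrite integral_sqdist_sorted // subr0.
Qed.

Lemma gap_cost_le_distortion (g : {fset R}) (u v a : R) (s : seq R) :
  0 <= u -> v <= 1 -> path <=%R u (a :: rcons s v) ->
  (forall p, p \in g -> clamp u v p \in a :: s) ->
  (((a - u) ^+ 3 / 3 + gap_cost v a s)%:E <= distortion (unif01 R) g)%E.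
Proof.
move=> u0 v1 sorted_s gs; rewrite distortion_unif01 -integral_sqdist_sorted //.
have /allP u_le := order_path_min le_trans sorted_s.
have uv : u <= v by apply: u_le; rewrite inE mem_rcons mem_head orbT.
apply: (@le_trans _ _ (\int[mu]_(x in `[u, v]) sqdist_min g x)%E).
  apply: ge0_le_integral => //.
  - by move=> x _; exact: sqdist_seq_ge0.
  - exact: measurable_funTS (measurable_sqdist_seq _).
  - exact: measurable_funTS (measurable_sqdist_seq _).
  - by move=> x; rewrite /= in_itv /= => xuv; exact: sqdist_clamp_le gs.
apply: ge0_subset_integral => //.
- exact: measurable_funTS (measurable_sqdist_seq _).
- by move=> x _; exact: sqdist_seq_ge0.
- by move=> x; rewrite /= !in_itv /= => /andP[ux xv]; apply/andP; split; lra.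
Qed.

Lemma unif01_itv (u v : R) : 0 <= u -> u <= v -> v <= 1 ->
  unif01 R `[u, v] = (v - u)%:E.
Proof.
move=> u0 uv v1.
have -> : unif01 R `[u, v] = (\int[mu]_(x in `[u, v]) (uniform_pdf 0 1 x)%:E)%E by [].
rewrite (eq_integral (mu := mu) (cst 1%E)); last first.
  move=> x; rewrite in_setE /= in_itv /= => /andP[ux xv].
  by rewrite /uniform_pdf ifT ?subr0 ?invr1 //; apply/andP; split; lra.
rewrite integral_cst // mul1e.
have := lebesgue_measure_itv `[u, v]%R; rewrite /= lte_fin => ->.
case: ltP => [_|vu]; first by rewrite EFinB.
have -> : v = u by apply/le_anti/andP.
by rewrite subrr.
Qed.

Lemma unif01_itv_gt0 (u v : R) : 0 <= u -> u < v -> v <= 1 ->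
  (0 < unif01 R `[u, v])%E.
Proof. by move=> u0 uv v1; rewrite unif01_itv ?(ltW uv) // lte_fin subr_gt0. Qed.

Lemma voronoi_between (g : {fset R}) (a b c : R) :
  a \in g -> c \in g -> a < b < c ->
  (forall d, d \in g -> [\/ d <= a, d = b | c <= d]) ->
  voronoi g b = `[(a + b) / 2, (b + c) / 2].
Proof.
move=> ag cg /andP[ab bc] g_split; apply/seteqP; split => x /=.
  move=> xb; have := xb a ag; have := xb c cg; rewrite !ler_norm_sqr in_itv /=.
  by move=> xc xa; apply/andP; split; nra.
rewrite in_itv /= => /andP[ax xc] d /g_split[da|->|cd]; rewrite ler_norm_sqr //.
- by apply: sqr_ge_nearer; lra.
- by apply: sqr_le_nearer; lra.
Qed.

End UniformQuantization.

Section TwoFixedPoints.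
Variable R : realType.
Local Notation beta := ([fset 1/4; 1/2]%fset : {fset R}).

Definition codebook (p1 p2 p3 : R) : {fset R} := ([fset p1; p2; p3] `|` beta)%fset.

Definition V5 : R := 613 / (12 ^+ 3 * 10 ^+ 2).

Lemma in_codebook (p1 p2 p3 b : R) : b \in codebook p1 p2 p3 ->
  [\/ b = p1, b = p2, b = p3 | b = 1/4 \/ b = 1/2].
Proof.
rewrite !inE => /or3P[/orP[/orP[]|]||] /eqP->;
  by [apply: Or41 | apply: Or42 | apply: Or43 | apply: Or44; left | apply: Or44; right].
Qed.

Lemma card_free_codepoints : (5 - #|` beta|)%N = 3.
Proof. by rewrite cardfs2; have /negPf-> : (1/4 : R) != 1/2 by apply/eqP; lra. Qed.

Lemma codebook_of_card3 (alpha : {fset R}) : (#|` alpha| <= 3)%N ->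
  exists p1 p2 p3, [/\ p1 <= p2, p2 <= p3 & (alpha `|` beta)%fset = codebook p1 p2 p3].
Proof. by move=> alpha3; apply: (fsetU_sorted3 (d := 1/4)); rewrite // !inE eqxx. Qed.

Lemma V5_lt_distortion_above_quarter (p1 p2 p3 : R) :
  1/4 <= p1 -> p1 <= p2 -> p2 <= p3 ->
  (V5%:E < distortion (unif01 R) (codebook p1 p2 p3))%E.
Proof.
move=> p1_ge p12 p23.
apply: lt_le_trans (@gap_cost_le_distortion _ _ 0 (1/4) (1/4) [::] _ _ _ _) => //=.
- by rewrite lte_fin /V5; lra.
- by lra.
- by lra.
- by move=> p /in_codebook[| | |[]] ->; rewrite clamp_ge_r ?mem_head //; lra.
Qed.

Lemma V5_lt_distortion_below_half (p1 p2 p3 : R) :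
  p1 <= p2 -> p2 <= 1/2 -> p2 <= p3 ->
  (V5%:E < distortion (unif01 R) (codebook p1 p2 p3))%E.
Proof.
move=> p12 p2_le p23; set q := clamp (1/2) 1 p3.
have /andP[q_ge q_le] : 1/2 <= q <= 1 by apply: clamp_itv; lra.
apply: lt_le_trans (@gap_cost_le_distortion _ _ (1/2) 1 (1/2) [:: q] _ _ _ _) => //=.
- have -> : (1/2 - 1/2) ^+ 3 / 3 + ((q - 1/2) ^+ 3 / 12 + (1 - q) ^+ 3 / 3) =
      1/216 + 1/12 * cube_excess (1/3) (q - 1/2) + 1/3 * cube_excess (1/6) (1 - q).
    by rewrite /cube_excess; field.
  have := @cube_excess_ge0 R (1/3) (q - 1/2); have := @cube_excess_ge0 R (1/6) (1 - q).
  by rewrite lte_fin /V5; lra.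
- by lra.
- move=> p /in_codebook[| | |[]] ->; rewrite ?mem_head ?inE ?eqxx ?orbT //;
    by rewrite clamp_le_l ?mem_head //; lra.
Qed.

Lemma V5_le_distortion_straddle (p1 p2 p3 : R) : p1 < 1/4 -> 1/2 < p2 -> p2 <= p3 ->
  (V5%:E <= distortion (unif01 R) (codebook p1 p2 p3))%E /\
  (distortion (unif01 R) (codebook p1 p2 p3) = V5%:E ->
   [/\ p1 = 1/12, p2 = 7/10 & p3 = 9/10]).
Proof.
move=> p1_lt p2_gt p23.
set r := clamp 0 1 p1; set q2 := clamp 0 1 p2; set q3 := clamp 0 1 p3.
have /andP[r_ge0 _] : 0 <= r <= 1 by apply: clamp_itv; lra.
have r_le : r <= 1/4 by apply: clamp_le; lra.
have q2_ge : 1/2 <= q2 by apply: clamp_ge; lra.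
have q23 : q2 <= q3 by apply: clamp_homo; lra.
have /andP[_ q3_le] : 0 <= q3 <= 1 by apply: clamp_itv; lra.
have sorted_s : path <=%R 0 (r :: rcons [:: 1/4; 1/2; q2; q3] 1).
  by rewrite /= r_ge0 r_le q2_ge q23 q3_le /=; lra.
have clamp_s p : p \in codebook p1 p2 p3 -> clamp 0 1 p \in [:: r; 1/4; 1/2; q2; q3].
  move=> /in_codebook[| | |[]] ->;
    by rewrite -/r -/q2 -/q3 ?clamp_id ?inE ?eqxx ?orbT //; lra.
have := gap_cost_le_distortion (lexx _) (lexx _) sorted_s clamp_s; rewrite /= subr0.
have -> : r ^+ 3 / 3 + ((1/4 - r) ^+ 3 / 12 + ((1/2 - 1/4) ^+ 3 / 12 +
      ((q2 - 1/2) ^+ 3 / 12 + ((q3 - q2) ^+ 3 / 12 + (1 - q3) ^+ 3 / 3)))) =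
    V5 + (1/3 * cube_excess (1/12) r + 1/12 * cube_excess (1/6) (1/4 - r) +
      1/12 * cube_excess (1/5) (q2 - 1/2) + 1/12 * cube_excess (1/5) (q3 - q2) +
      1/3 * cube_excess (1/10) (1 - q3)).
  by rewrite /cube_excess /V5; field.
have e1 := @cube_excess_ge0 R (1/12) r; have e2 := @cube_excess_ge0 R (1/6) (1/4 - r).
have e3 := @cube_excess_ge0 R (1/5) (q2 - 1/2); have e4 := @cube_excess_ge0 R (1/5) (q3 - q2).
have e5 := @cube_excess_ge0 R (1/10) (1 - q3).
move=> cost_le; split=> [|D_eq]; first by apply: le_trans cost_le; rewrite lee_fin; lra.
move: cost_le; rewrite D_eq lee_fin => excess_le0.
have r_eq : r = 1/12 by apply: cube_excess_le0; lra.
have q2_eq : q2 - 1/2 = 1/5 by apply: cube_excess_le0; lra.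
have q3_eq : q3 - q2 = 1/5 by apply: cube_excess_le0; lra.
by split; apply: (clamp_inj_in (u := 0) (v := 1)); rewrite -/r -/q2 -/q3; lra.
Qed.

Lemma V5_le_distortion (p1 p2 p3 : R) : p1 <= p2 -> p2 <= p3 ->
  (V5%:E <= distortion (unif01 R) (codebook p1 p2 p3))%E /\
  (distortion (unif01 R) (codebook p1 p2 p3) = V5%:E ->
   [/\ p1 = 1/12, p2 = 7/10 & p3 = 9/10]).
Proof.
move=> p12 p23.
have [p1_ge|p1_lt] := leP (1/4) p1.
  have V5_lt := V5_lt_distortion_above_quarter p1_ge p12 p23.
  by split=> [|D_eq]; [exact: ltW | move: V5_lt; rewrite D_eq ltxx].
have [p2_le|p2_gt] := leP p2 (1/2).
  have V5_lt := V5_lt_distortion_below_half p12 p2_le p23.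
  by split=> [|D_eq]; [exact: ltW | move: V5_lt; rewrite D_eq ltxx].
exact: V5_le_distortion_straddle.
Qed.

Lemma distortion_optimal : distortion (unif01 R) (codebook (1/12) (7/10) (9/10)) = V5%:E.
Proof.
rewrite (@distortion_unif01_sorted _ _ (1/12) [:: 1/4; 1/2; 7/10; 9/10]) /=.
- by rewrite /V5; congr (_%:E); field.
- by move=> x; rewrite !inE; do ![case: (_ == _)].
- by lra.
Qed.

Lemma cond_error_V5 : cond_error (unif01 R) 5 beta = V5%:E.
Proof.
rewrite /cond_error card_free_codepoints; apply/le_anti/andP; split.
  rewrite -distortion_optimal; apply: ereal_inf_lbound.
  by exists [fset 1/12; 7/10; 9/10]%fset => //; exact: cardfs3_le.
apply/ereal_infP => _ [alpha /codebook_of_card3[p1 [p2 [p3 [p12 p23 ->]]]] <-].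
exact: (V5_le_distortion p12 p23).1.
Qed.

Lemma voronoi_optimal_gt0 (b : R) : b \in beta ->
  (0 < unif01 R (voronoi (codebook (1/12) (7/10) (9/10)) b))%E.
Proof.
have inG x : x \in [:: 1/12; 1/4; 1/2; 7/10; 9/10] -> x \in codebook (1/12) (7/10) (9/10).
  by rewrite !inE; do ![case: (_ == _)].
rewrite !inE => /orP[] /eqP->.
  rewrite (@voronoi_between _ _ (1/12) _ (1/2)) ?inG ?inE ?eqxx ?orbT //.
  - by apply: unif01_itv_gt0; lra.
  - by lra.
  by move=> d /in_codebook[| | |[]] ->;
    [apply: Or31 | apply: Or33 | apply: Or33 | apply: Or32 | apply: Or33]; lra.
rewrite (@voronoi_between _ _ (1/4) _ (7/10)) ?inG ?inE ?eqxx ?orbT //.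
- by apply: unif01_itv_gt0; lra.
- by lra.
by move=> d /in_codebook[| | |[]] ->;
  [apply: Or31 | apply: Or33 | apply: Or33 | apply: Or31 | apply: Or32]; lra.
Qed.

End TwoFixedPoints.

Local Close Scope classical_set_scope.
Local Open Scope fset_scope.

Theorem proposition3p4 (R : realType) :
  let P := unif01 R in
  let beta : {fset R} := [fset 1/4; 1/2] in
  let alpha5 : {fset R} := [fset 1/12; 1/4; 1/2; 7/10; 9/10] in
  [/\ cond_optimal_set P 5 beta alpha5,
      (forall g, cond_optimal_set P 5 beta g -> g = alpha5) &
      cond_error P 5 beta = (613 / (12 ^+ 3 * 10 ^+ 2))%:E].
Proof.
move=> P beta alpha5.
have alpha5E : alpha5 = codebook (1/12) (7/10) (9/10).
  by apply/fsetP => x; rewrite !inE; do ![case: (_ == _)].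
split; last exact: cond_error_V5.
  exists [fset 1/12; 7/10; 9/10]; split.
  - by rewrite card_free_codepoints cardfs3_le.
  - by rewrite alpha5E.
  - by rewrite cond_error_V5 alpha5E distortion_optimal.
  - by move=> b; rewrite alpha5E; exact: voronoi_optimal_gt0.
move=> _ [alpha [+ -> + _]]; rewrite card_free_codepoints.
move=> /codebook_of_card3[p1 [p2 [p3 [p12 p23 ->]]]]; rewrite cond_error_V5 => D_eq.
by have [_ /(_ D_eq)[-> -> ->]] := V5_le_distortion p12 p23.
Qed.
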